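(* For all integers $n\ge 1$ and $k\ge 0$, the number of Dyck $n$-paths having exactly $n-2k$ ascents of odd length equals \[\frac{1}{n+1}\binom{n+1}{2k+1}\binom{n+k}{k}.\]
   Context: A Dyck $n$-path is a path from $(0,0)$ to $(2n,0)$ with $n$ upsteps $U=(1,1)$ and $n$ downsteps $D=(1,-1)$ never going below the $x$-axis. An ascent is a maximal run of consecutive upsteps; its length is its number of upsteps. *)

From mathcomp Require Import all_boot all_algebra.
Set Implicit Arguments. Unset Strict Implicit. Unset Printing Implicit Defensive.

(* A lattice path is encoded as a sequence of booleans: true = upstep U=(1,1),
   false = downstep D=(1,-1). *)

Definition height (p : seq bool) : int :=
  (count id p)%:Z - (count negb p)%:Z.

Definition dyck_path (n : nat) (p : seq bool) : bool :=
  [&& size p == 2 * n, count id p == n, count negb p == n &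
      all (fun i => (0 <= height (take i p))%R) (iota 0 (size p).+1)].

(* lengths of the maximal runs of consecutive upsteps (ascents), in order *)
Fixpoint ascent_lengths_aux (cur : nat) (p : seq bool) : seq nat :=
  match p with
  | [::] => if cur == 0 then [::] else [:: cur]
  | true :: q => ascent_lengths_aux cur.+1 q
  | false :: q => if cur == 0 then ascent_lengths_aux 0 q
                  else cur :: ascent_lengths_aux 0 q
  end.

Definition ascent_lengths (p : seq bool) : seq nat := ascent_lengths_aux 0 p.

Definition odd_ascents (p : seq bool) : nat := count odd (ascent_lengths p).

(* Writing a path as U^c_1 D U^c_2 D ... U^c_n D identifies Dyck n-paths with
   sequences c of n naturals of sum n satisfying i <= c_1 + ... + c_i for all i
   (the height right after the i-th downstep is c_1 + ... + c_i - i), and the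
   odd ascents with the odd c_i.  Appending a 0 gives a sequence of length n + 1 and sum n
   whose proper prefixes all dominate their length; by the cycle lemma exactly
   one of the n + 1 rotations of any sequence of length n + 1 and sum n has this
   property.  Hence n + 1 times our count is the number of sequences of n + 1
   naturals of sum n with exactly j = n - 2k odd entries, which is
   C(n+1, j) C(n+k, k): choose the odd positions, then distribute the k halves
   over the n + 1 places. *)

From mathcomp Require Import all_boot all_algebra zify.
Import GRing.Theory Num.Theory.
Set Implicit Arguments. Unset Strict Implicit. Unset Printing Implicit Defensive.

Fixpoint path_of_runs (c : seq nat) : seq bool :=
  if c is a :: c' then nseq a true ++ false :: path_of_runs c' else [::].

(* A final run of upsteps, not followed by a downstep, is dropped. *)
Fixpoint up_runs_from (a : nat) (p : seq bool) : seq nat :=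
  match p with
  | [::] => [::]
  | true :: q => up_runs_from a.+1 q
  | false :: q => a :: up_runs_from 0 q
  end.

Definition up_runs : seq bool -> seq nat := up_runs_from 0.

Lemma count_id_path_of_runs c : count id (path_of_runs c) = sumn c.
Proof. by elim: c => //= a c IH; rewrite count_cat count_nseq /= IH; lia. Qed.

Lemma count_negb_path_of_runs c : count negb (path_of_runs c) = size c.
Proof. by elim: c => //= a c IH; rewrite count_cat count_nseq /= IH; lia. Qed.

Lemma size_path_of_runs c : size (path_of_runs c) = sumn c + size c.
Proof. by elim: c => //= a c IH; rewrite size_cat size_nseq /= IH; lia. Qed.

Lemma up_runs_from_nseq a b q :
  up_runs_from a (nseq b true ++ false :: q) = (a + b) :: up_runs q.
Proof. by elim: b a => [|b IH] a /=; rewrite ?addn0 ?IH ?addnS. Qed.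

Lemma path_of_runsK : cancel path_of_runs up_runs.
Proof. by elim=> //= a c IH; rewrite /up_runs up_runs_from_nseq IH. Qed.

Lemma up_runs_fromK a p : last true p = false ->
  path_of_runs (up_runs_from a p) = nseq a true ++ p.
Proof.
elim: p a => //= -[] q IH a; case: q IH => [|x q] IH //= last_q.
  by rewrite IH //; elim: a {IH last_q} => //= a ->.
by rewrite IH.
Qed.

Lemma odd_ascents_path_of_runs c : odd_ascents (path_of_runs c) = count odd c.
Proof.
rewrite /odd_ascents /ascent_lengths.
have asc_nseq a b q : ascent_lengths_aux a (nseq b true ++ false :: q) =
    if a + b == 0 then ascent_lengths_aux 0 q else (a + b) :: ascent_lengths_aux 0 q.
  by elim: b a => [|b IH] a /=; rewrite ?addn0 ?IH ?addnS.
by elim: c => //= -[|a] c IH; rewrite asc_nseq //= IH.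
Qed.

Lemma height_cat p q : height (p ++ q) = (height p + height q)%R.
Proof. rewrite /height !count_cat; lia. Qed.

Lemma height_cons b p : height (b :: p) = ((if b then 1 else -1) + height p)%R.
Proof. rewrite /height /=; case: b => /=; lia. Qed.

Lemma height_nseq_true a : height (nseq a true) = a.
Proof. rewrite /height !count_nseq /=; lia. Qed.

Lemma take_path_of_runs_cons a m c :
  take (a + m).+1 (path_of_runs (a :: c)) = nseq a true ++ false :: take m (path_of_runs c).
Proof. by rewrite /= take_cat size_nseq ltnNge leqW ?leq_addr //= -addnS addKn. Qed.

(* The height right after the [i]-th downstep is [h + sumn (take i c) - i];
   the heights in between only add upsteps to these. *)
Lemma height_path_of_runs_ge0 (h : int) c :
  (forall m, (0 <= h + height (take m (path_of_runs c)))%R) <->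
  (forall i, i <= size c -> (0 <= h + (sumn (take i c))%:Z - i%:Z)%R).
Proof.
elim: c h => [|a c IH] h /=.
  split=> ge0; last by move=> m; have := ge0 0 (leqnn 0); rewrite /height /=; lia.
  by move=> i; rewrite leqn0 => /eqP->; have := ge0 0; rewrite /height /=; lia.
have heightS m : height (take (a + m).+1 (path_of_runs (a :: c))) =
    (a%:Z - 1 + height (take m (path_of_runs c)))%R.
  by rewrite take_path_of_runs_cons height_cat height_nseq_true height_cons; lia.
split=> ge0.
  have h_ge0 : (0 <= h)%R by have := ge0 0; rewrite take0 /height /=; lia.
  have /IH ge0_c m : (0 <= h + a%:Z - 1 + height (take m (path_of_runs c)))%R.
    by have := ge0 (a + m).+1; rewrite heightS; lia.
  by case=> [|i] le_ic /=; [lia | have := ge0_c i le_ic; lia].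
have /IH ge0_c i : i <= size c -> (0 <= h + a%:Z - 1 + (sumn (take i c))%:Z - i%:Z)%R.
  by move=> le_ic; have := ge0 i.+1 le_ic; rewrite /=; lia.
move=> m; have [le_ma | lt_am] := leqP m a.
  rewrite /= takel_cat ?size_nseq // take_nseq // height_nseq_true.
  by have := ge0 0 isT; rewrite take0 /=; lia.
have -> : m = (a + (m - a.+1)).+1 by lia.
by rewrite heightS; have := ge0_c (m - a.+1); lia.
Qed.

Lemma all_height_ge0P p :
  reflect (forall m, (0 <= height (take m p))%R)
          (all (fun i => 0 <= height (take i p))%R (iota 0 (size p).+1)).
Proof.
apply: (iffP allP) => [ge0 m | ge0 i _]; last exact: ge0.
have [le_mp | lt_pm] := leqP m (size p); first by apply: ge0; rewrite mem_iota.
rewrite take_oversize ?(ltnW lt_pm) // -{1}(take_size p).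
by apply: ge0; rewrite mem_iota /= ltnS.
Qed.

Lemma dyck_path_of_runsP n c : size c = n -> sumn c = n ->
  reflect (forall i, i <= n -> i <= sumn (take i c)) (dyck_path n (path_of_runs c)).
Proof.
move=> size_c sum_c.
have size_p : size (path_of_runs c) == 2 * n.
  by rewrite size_path_of_runs size_c sum_c mul2n addnn.
rewrite /dyck_path size_p count_id_path_of_runs count_negb_path_of_runs size_c sum_c eqxx.
apply: (iffP (all_height_ge0P _)) => [ge0 | le_take].
  have /(height_path_of_runs_ge0 0 c) ge0_c m :
      (0 <= 0 + height (take m (path_of_runs c)))%R by rewrite add0r.
  by rewrite size_c in ge0_c; move=> i /ge0_c; lia.
have /(height_path_of_runs_ge0 0 c) ge0 i :
    i <= size c -> (0 <= 0 + (sumn (take i c))%:Z - i%:Z)%R.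
  by rewrite size_c => /le_take; lia.
by move=> m; have := ge0 m; rewrite add0r.
Qed.

Lemma dyck_path_last n p : 0 < n -> dyck_path n p -> last true p = false.
Proof.
move=> n_gt0 /and4P[/eqP size_p /eqP ups /eqP downs /allP heights].
move: size_p ups downs heights; case/lastP: p => [|q b]; first by move=> /=; lia.
rewrite last_rcons; case: b => //; rewrite size_rcons -!cats1 !count_cat.
move=> size_q ups downs heights; exfalso; have := heights (size q).
by rewrite mem_iota take_size_cat // /height; move: ups downs => /=; lia.
Qed.

Lemma dyck_path_up_runs n p : 0 < n -> dyck_path n p ->
  [/\ path_of_runs (up_runs p) = p, size (up_runs p) = n & sumn (up_runs p) = n].
Proof.
move=> n_gt0 dyck_p; have runsK : path_of_runs (up_runs p) = p.
  by rewrite up_runs_fromK ?(dyck_path_last n_gt0).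
case/and4P: dyck_p => _ /eqP ups /eqP downs _.
by rewrite -count_negb_path_of_runs -count_id_path_of_runs runsK.
Qed.

Definition lukasiewicz (s : seq nat) : bool :=
  all (fun i => i <= sumn (take i s)) (iota 0 (size s)).

Lemma lukasiewiczP s :
  reflect (forall i, i < size s -> i <= sumn (take i s)) (lukasiewicz s).
Proof.
by apply: (iffP allP) => le_take i i_lt; apply: le_take; move: i_lt; rewrite mem_iota.
Qed.

Lemma lukasiewicz_rcons0P c :
  reflect (forall i, i <= size c -> i <= sumn (take i c)) (lukasiewicz (rcons c 0)).
Proof.
apply: (iffP (lukasiewiczP _)); rewrite size_rcons -cats1 => le_take i i_le_c.
  by rewrite -(takel_cat [:: 0] i_le_c); apply: le_take.
by rewrite takel_cat //; apply: le_take.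
Qed.

Definition first_argmin (f : nat -> nat) (N r : nat) : Prop :=
  [/\ r < N, forall j, j < N -> f r <= f j & forall j, j < r -> f r < f j].

Lemma first_argmin_uniq f N r r' :
  first_argmin f N r -> first_argmin f N r' -> r = r'.
Proof.
move=> [r_lt min_r first_r] [r'_lt min_r' first_r'].
case: (ltngtP r r') => // [/first_r' | /first_r].
  by have := min_r r' r'_lt; lia.
by have := min_r' r r_lt; lia.
Qed.

Lemma first_argmin_exists f N : 0 < N -> exists r, first_argmin f N r.
Proof.
case: N => // N _.
pose m : 'I_N.+1 := [arg min_(i < ord0) f i].
have min_m j : j < N.+1 -> f m <= f j.
  by rewrite /m; case: arg_minnP => // i _ min_i j_lt; apply: (min_i (Ordinal j_lt)).
have ex_min : exists r, (r < N.+1) && (f r == f m) by exists m; rewrite ltn_ord eqxx.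
case: (ex_minnP ex_min) => r /andP[r_lt /eqP fr] first_r; exists r; split=> // [j|j j_lt].
  by rewrite fr; apply: min_m.
rewrite ltn_neqAle fr min_m ?andbT; last lia.
apply/eqP => fj; have := first_r j; rewrite -fj eqxx (ltn_trans j_lt r_lt).
by move=> /(_ isT); lia.
Qed.

Lemma sumn_take_rot_le s r i : r <= size s -> i <= size s - r ->
  sumn (take i (rot r s)) + sumn (take r s) = sumn (take (r + i) s).
Proof. by move=> r_le i_le; rewrite /rot takel_cat ?size_drop // takeD sumn_cat addnC. Qed.

Lemma sumn_take_rot_ge s r i : r <= size s -> size s - r <= i -> i <= size s ->
  sumn (take i (rot r s)) + sumn (take r s) = sumn s + sumn (take (i - (size s - r)) s).
Proof.
move=> r_le i_ge i_le; rewrite /rot take_cat size_drop ltnNge i_ge /= take_takel; last lia.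
by rewrite sumn_cat addnAC -sumn_cat -/(rot r s) sumn_rot.
Qed.

Section CycleLemma.

Variables (s : seq nat) (N : nat).
Hypotheses (N_gt0 : 0 < N) (size_s : size s = N) (sum_s : sumn s = N.-1).

(* [sumn (take j s) - j], shifted by [N] to stay in [nat] *)
Let excess j := sumn (take j s) + N - j.

Lemma lukasiewicz_rot r : r < N -> lukasiewicz (rot r s) <-> first_argmin excess N r.
Proof.
move=> r_lt; rewrite /excess.
have sum0 : sumn (take 0 s) = 0 by rewrite take0.
have sumN : sumn (take N s) = N.-1 by rewrite take_oversize ?size_s.
have rot_le i := @sumn_take_rot_le s r i; have rot_ge i := @sumn_take_rot_ge s r i.
rewrite size_s sum_s in rot_le rot_ge.
split=> [/lukasiewiczP | [_ min_r first_r]]; last apply/lukasiewiczP; rewrite size_rot size_s.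
  move=> luk; have before_r j : j < r -> sumn (take r s) + N - r < sumn (take j s) + N - j.
    move=> j_lt; have := luk (j + (N - r)) ltac:(lia).
    have := rot_ge (j + (N - r)) ltac:(lia) ltac:(lia) ltac:(lia).
    rewrite addnK; lia.
  split=> // j j_lt; have [le_rj | lt_jr] := leqP r j; last exact/ltnW/before_r.
  have := luk (j - r) ltac:(lia); have := rot_le (j - r) ltac:(lia) ltac:(lia).
  rewrite subnKC //; lia.
move=> i i_lt; have [le_i | gt_i] := leqP i (N - r).
  have := rot_le i ltac:(lia) le_i; have [lt_riN | ge_riN] := ltnP (r + i) N.
    by have := min_r (r + i) lt_riN; lia.
  have -> : r + i = N by lia.
  by have := first_r 0 ltac:(lia); rewrite sum0; lia.
have := rot_ge i ltac:(lia) (ltnW gt_i) (ltnW i_lt).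
by have := first_r (i - (N - r)) ltac:(lia); lia.
Qed.

Lemma cycle_lemma :
  exists2 r, r < N & forall r', r' < N -> lukasiewicz (rot r' s) = (r' == r).
Proof.
have [r min_r] := first_argmin_exists excess N_gt0; have [r_lt _ _] := min_r.
exists r => // r' r'_lt; apply/idP/eqP => [/(lukasiewicz_rot r'_lt) min_r' | ->].
  exact: first_argmin_uniq min_r' min_r.
exact/(lukasiewicz_rot r_lt).
Qed.

End CycleLemma.

Lemma sumn_map_val_tuple m N (t : m.-tuple 'I_N) :
  sumn (map val t) = \sum_(i < m) tnth t i.
Proof. by rewrite sumnE big_map big_tuple. Qed.

Lemma count_map_val_tuple m N (a : pred nat) (t : m.-tuple 'I_N) :
  count a (map val t) = \sum_(i < m) a (tnth t i).
Proof. by rewrite -sumn_count sumnE !big_map big_tuple. Qed.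

Lemma sum_mem_card m (A : {set 'I_m}) : \sum_(i < m) (i \in A) = #|A|.
Proof. by rewrite -sum1_card [RHS]big_mkcond; apply: eq_bigr => i _; case: (i \in A). Qed.

Definition weak_compositions_odd m n j :=
  [set t : m.+1.-tuple 'I_n.+1 | (sumn (map val t) == n) && (count odd (map val t) == j)].

Section ParityCompositions.

Variables (m n k j : nat).
Hypothesis n_eq : n = j + 2 * k.

Definition merge_parity (x : {set 'I_m.+1} * m.+1.-tuple 'I_k.+1) : m.+1.-tuple 'I_n.+1 :=
  [tuple inord (2 * tnth x.2 i + (i \in x.1)) | i < m.+1].

Definition parity_data :=
  setX [set O : {set 'I_m.+1} | #|O| == j]
       [set e : m.+1.-tuple 'I_k.+1 | \sum_(i <- e) i == k].

Lemma card_parity_data : #|parity_data| = 'C(m.+1, j) * 'C(m + k, m).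
Proof. by rewrite cardsX card_draws card_ord card_ord_partitions. Qed.

Lemma merge_parityE (O : {set 'I_m.+1}) e i : #|O| = j ->
  tnth (merge_parity (O, e)) i = 2 * tnth e i + (i \in O) :> nat.
Proof.
move=> card_O; rewrite tnth_mktuple inordK // n_eq; have := ltn_ord (tnth e i).
case: (boolP (i \in O)) => [i_in | _] /=; last lia.
suff : 0 < #|O| by lia.
by apply/card_gt0P; exists i.
Qed.

Lemma merge_parity_inj : {in parity_data &, injective merge_parity}.
Proof.
move=> [O e] [O' e'] /[!inE] /= /andP[/eqP card_O _] /andP[/eqP card_O' _] eq_merge.
have eq_i i : 2 * tnth e i + (i \in O) = 2 * tnth e' i + (i \in O').
  by rewrite -!merge_parityE ?eq_merge.
have eq_O i : (i \in O) = (i \in O').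
  by have := eq_i i; case: (i \in O); case: (i \in O') => //=; lia.
congr (_, _); first exact/setP.
apply: eq_from_tnth => i; apply: ord_inj.
by have := eq_i i; rewrite eq_O => /addIn/eqP; rewrite eqn_pmul2l // => /eqP.
Qed.

Lemma merge_parity_image : merge_parity @: parity_data = weak_compositions_odd m n j.
Proof.
apply/setP => t; apply/imsetP/idP.
  move=> [[O e] /[!inE] /= /andP[/eqP card_O /eqP sum_e] ->].
  have mE i := merge_parityE e i card_O.
  rewrite sumn_map_val_tuple count_map_val_tuple (eq_bigr _ (fun i _ => mE i)).
  rewrite big_split /= -big_distrr sum_mem_card card_O; move: sum_e; rewrite big_tuple => ->.
  rewrite addnC -n_eq eqxx /= -card_O -sum_mem_card.
  by apply/eqP/eq_bigr => i _; rewrite mE oddD oddM; case: (_ \in _).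
rewrite inE sumn_map_val_tuple count_map_val_tuple => /andP[/eqP sum_t /eqP odd_t].
have halves : \sum_(i < m.+1) (tnth t i)./2 = k.
  suff : \sum_(i < m.+1) tnth t i =
         \sum_(i < m.+1) odd (tnth t i) + 2 * \sum_(i < m.+1) (tnth t i)./2.
    by rewrite sum_t odd_t; lia.
  rewrite big_distrr -big_split /=; apply: eq_bigr => i _.
  by rewrite -{1}(odd_double_half (tnth t i)) -mul2n.
pose e := [tuple (inord (tnth t i)./2 : 'I_k.+1) | i < m.+1].
have eE i : tnth e i = (tnth t i)./2 :> nat.
  by rewrite tnth_mktuple inordK // ltnS -halves (bigD1 i) //= leq_addr.
have card_odd : #|[set i | odd (tnth t i)]| = j.
  by rewrite -sum_mem_card -odd_t; apply: eq_bigr => i _; rewrite inE.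
exists ([set i | odd (tnth t i)], e).
  rewrite !inE big_tuple card_odd eqxx -[X in _ == X]halves /=.
  by apply/eqP/eq_bigr => i _; rewrite eE.
apply: eq_from_tnth => i; apply: ord_inj.
by rewrite merge_parityE // eE inE -{1}(odd_double_half (tnth t i)) -mul2n addnC.
Qed.

Lemma card_weak_compositions_odd :
  #|weak_compositions_odd m n j| = 'C(m.+1, j) * 'C(m + k, m).
Proof.
by rewrite -merge_parity_image card_in_imset ?card_parity_data //; exact: merge_parity_inj.
Qed.

End ParityCompositions.

Definition lukasiewicz_tuples n j := [set t : n.+1.-tuple 'I_n.+1 |
  [&& sumn (map val t) == n, lukasiewicz (map val t) & count odd (map val t) == j]].

Lemma card_rot_lukasiewicz n j r :
  #|[set t in weak_compositions_odd n n j | lukasiewicz (rot r (map val t))]| =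
  #|lukasiewicz_tuples n j|.
Proof.
have rotP (s : seq nat) : perm_eq (rot r s) s by rewrite perm_rot.
have rotrP (s : seq nat) : perm_eq (rotr r s) s by rewrite perm_rotr.
pose rot_t (t : n.+1.-tuple 'I_n.+1) := rot_tuple r t.
have rot_t_inj : injective rot_t by move=> u v /(congr1 val)/rot_inj/val_inj.
rewrite -(card_imset _ rot_t_inj); apply: eq_card => t; apply/imsetP/idP.
  move=> [u /[!inE] /andP[/andP[sum_u odd_u] luk_u] ->].
  by rewrite /= map_rot (perm_sumn (rotP _)) (permP (rotP _)) sum_u luk_u odd_u.
rewrite inE => /and3P[sum_t luk_t odd_t].
exists (rotr_tuple r t); last exact/val_inj/esym/rotrK.
by rewrite !inE /= map_rotr rotrK (perm_sumn (rotrP _)) (permP (rotrP _)) sum_t luk_t odd_t.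
Qed.

Lemma card_lukasiewicz_tuples n j :
  n.+1 * #|lukasiewicz_tuples n j| = #|weak_compositions_odd n n j|.
Proof.
set W := weak_compositions_odd n n j.
have one_rot t : t \in W -> \sum_(r < n.+1) lukasiewicz (rot r (map val t)) = 1.
  rewrite inE => /andP[/eqP sum_t _].
  have size_t : size (map val t) = n.+1 by rewrite size_map size_tuple.
  have [r0 r0_lt luk_rot] := cycle_lemma (ltn0Sn n) size_t sum_t.
  rewrite (bigD1 (Ordinal r0_lt)) //= luk_rot // eqxx big1 // => r r_neq.
  by move: r_neq; rewrite -val_eqE luk_rot //= => /negbTE ->.
have card_rot (r : 'I_n.+1) :
    \sum_(t in W) lukasiewicz (rot r (map val t)) = #|lukasiewicz_tuples n j|.
  rewrite -(card_rot_lukasiewicz n j r) -sum1dep_card big_mkcondr /=.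
  by apply: eq_bigr => t _; case: lukasiewicz.
rewrite -[RHS]sum1_card (eq_bigr _ (fun t t_in => esym (one_rot t t_in))) exchange_big /=.
by rewrite (eq_bigr _ (fun r _ => card_rot r)) sum_nat_const card_ord.
Qed.

Lemma lukasiewicz_rcons_last c x :
  lukasiewicz (rcons c x) -> sumn (rcons c x) = size c -> x = 0.
Proof.
move=> /lukasiewiczP/(_ (size c)); rewrite size_rcons -cats1 take_size_cat //.
by rewrite sumn_cat /= => /(_ (ltnSn _)); lia.
Qed.

Lemma nth_leq_sumn c i : nth 0 c i <= sumn c.
Proof.
elim: c i => [|a c IH] [|i] //=; rewrite ?nth_nil ?leq_addr //.
exact: leq_trans (IH i) (leq_addl _ _).
Qed.

Lemma lukasiewicz_tuple_runs n (t : n.+1.-tuple 'I_n.+1) :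
  sumn (map val t) = n -> lukasiewicz (map val t) ->
  exists c, [/\ map val t = rcons c 0, size c = n & sumn c = n].
Proof.
move=> sum_t luk_t; case/lastP def_t : (map val t) => [|c x] in sum_t luk_t *.
  by move/(congr1 size): def_t; rewrite size_map size_tuple.
have size_c : size c = n.
  by move/(congr1 size): def_t; rewrite size_map size_tuple size_rcons => -[].
have x0 : x = 0 by apply: lukasiewicz_rcons_last luk_t _; rewrite sum_t.
by subst x; exists c; rewrite sumn_rcons addn0 in sum_t.
Qed.

Definition runs_tuple n (c : seq nat) : n.+1.-tuple 'I_n.+1 :=
  [tuple inord (nth 0 c i) | i < n.+1].

Lemma map_val_runs_tuple n c : size c = n -> sumn c = n ->
  map val (runs_tuple n c) = rcons c 0.
Proof.
move=> size_c sum_c; apply: (@eq_from_nth _ 0) => [|i].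
  by rewrite size_map size_tuple size_rcons size_c.
rewrite size_map size_tuple => i_lt; rewrite (nth_map ord0) ?size_tuple //.
rewrite -[i]/(nat_of_ord (Ordinal i_lt)) -tnth_nth tnth_mktuple /= inordK; last first.
  by rewrite ltnS -sum_c nth_leq_sumn.
by rewrite nth_rcons size_c if_same; case: ltnP => // ?; rewrite nth_default ?size_c.
Qed.

Definition dyck_ascents n j :=
  [set p : (2 * n).-tuple bool | dyck_path n p && (odd_ascents p == j)].

Lemma card_dyck_ascents n j : 0 < n -> #|dyck_ascents n j| = #|lukasiewicz_tuples n j|.
Proof.
move=> n_gt0; pose h (p : (2 * n).-tuple bool) := runs_tuple n (up_runs p).
have h_inj : {in dyck_ascents n j &, injective h}.
  move=> p q /[!inE] /andP[/(dyck_path_up_runs n_gt0)[pK size_p sum_p] _].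
  move=> /andP[/(dyck_path_up_runs n_gt0)[qK size_q sum_q] _] h_pq.
  move: (congr1 (fun t : n.+1.-tuple _ => map val t) h_pq).
  rewrite !map_val_runs_tuple // => /rcons_inj[eq_pq].
  by apply/val_inj; rewrite /= -pK -qK eq_pq.
rewrite -(card_in_imset h_inj); apply: eq_card => t; apply/imsetP/idP.
  move=> [p /[!inE] /andP[dyck_p /eqP odd_p] ->].
  have [pK size_p sum_p] := dyck_path_up_runs n_gt0 dyck_p.
  have odd_runs : count odd (up_runs p) = j.
    by rewrite -odd_p -{2}pK odd_ascents_path_of_runs.
  rewrite map_val_runs_tuple // sumn_rcons sum_p -cats1 count_cat odd_runs !addn0 !eqxx.
  rewrite /= andbT cats1.
  apply/lukasiewicz_rcons0P; rewrite size_p; apply/(dyck_path_of_runsP size_p sum_p).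
  by rewrite pK.
rewrite inE => /and3P[/eqP sum_t luk_t /eqP odd_t].
have [c [def_t size_c sum_c]] := lukasiewicz_tuple_runs sum_t luk_t.
have size_pc : size (path_of_runs c) == 2 * n.
  by rewrite size_path_of_runs size_c sum_c mul2n addnn.
exists (Tuple size_pc); last first.
  by apply/val_inj/(inj_map val_inj); rewrite /h /= path_of_runsK map_val_runs_tuple.
rewrite inE /= odd_ascents_path_of_runs -odd_t def_t -cats1 count_cat addn0 eqxx andbT.
apply/(dyck_path_of_runsP size_c sum_c); rewrite -size_c.
by apply/lukasiewicz_rcons0P; rewrite -def_t.
Qed.

Theorem mainTheorem8 (n k : nat) (hn : 1 <= n) :
  (#|[set p : (2 * n).-tuple bool |
       dyck_path n p && (Posz (odd_ascents p) == (Posz n - Posz (2 * k))%R)]|%:R : rat)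
  = (1 / (n.+1)%:R * ('C(n.+1, (2 * k).+1))%:R * ('C(n + k, k))%:R)%R.
Proof.
have [lt_n2k | le_2kn] := ltnP n (2 * k).
  rewrite bin_small ?ltnS // mulr0 mul0r; apply/eqP; rewrite pnatr_eq0 cards_eq0.
  by apply/eqP/setP => p; rewrite !inE; apply/negbTE/andP => -[_ /eqP]; lia.
have -> : [set p : (2 * n).-tuple bool |
    dyck_path n p && (Posz (odd_ascents p) == (Posz n - Posz (2 * k))%R)] =
    dyck_ascents n (n - 2 * k).
  by apply/setP => p; rewrite !inE; congr (_ && _); apply/eqP/eqP; lia.
have count_luk := card_lukasiewicz_tuples n (n - 2 * k).
have binom_odd : 'C(n.+1, n - 2 * k) = 'C(n.+1, (2 * k).+1) by rewrite -subSS bin_sub.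
have binom_half : 'C(n + k, n) = 'C(n + k, k).
  by rewrite -[X in 'C(_, X)](addnK k n) bin_sub ?leq_addl.
rewrite (@card_weak_compositions_odd n n k) ?subnK // binom_odd binom_half in count_luk.
rewrite card_dyck_ascents //; apply: (@mulfI _ n.+1%:R); first by rewrite pnatr_eq0.
by rewrite -natrM count_luk natrM div1r !mulrA mulfV ?mul1r // pnatr_eq0.
Qed.
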